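(* Let $X$ be a real Banach space, $f\in\Gamma_0(X)$ and $S_f^=\ne\emptyset$. Suppose there exist sequences $\{x_k\}\subset X$ and $\{x_k^*\}\subset X^*$ such that $x_k^*\in\partial f(x_k)$ for all $k$, $\|x_k\|\to\infty$, $\|x_k^*\|\to0$ as $k\to\infty$, and $\{f(x_k)\}$ is bounded below. Then for any $\varepsilon\in[0,|\partial f|_{\rm bd}]$ and any $g\in\mathrm{Ptb}(f,\varepsilon)$, the function $g-f$ is constant.
   Context: $\Gamma_0(X)$ denotes the class of extended-real-valued proper convex lower semicontinuous functions on $X$. For convex $f$, $\partial f(x):=\{x^*\in X^*\mid \langle x^*,u-x\rangle\le f(u)-f(x)\ \forall u\in X\}$ (empty if $x\notin\mathrm{dom}f$). $d(0,\emptyset)=+\infty$, $\inf\emptyset=+\infty$. $S_f:=\{x\mid f(x)\le0\}$, $S_f^=:=\{x\mid f(x)=0\}$. $|\partial f|_{\rm bd}:=\inf_{f(x)=0} d(0,\mathrm{bd}\,\partial f(x))$ (boundary in the norm topology of $X^*$). For $x\in S_f^=$, $\varepsilon\ge0$, $\delta\ge0$: $\tau(f,x,\varepsilon,\delta):=\inf_{u:\,f(u)\ge-\varepsilon\|u-x\|-\delta} d(0,\partial f(u))$ if $0\notin\mathrm{int}\,\partial f(x)$, and $\tau(f,x,\varepsilon,\delta):=d(0,\mathrm{bd}\,\partial f(x))$ if $0\in\mathrm{int}\,\partial f(x)$. Let $S_f\neq\emptyset$, $\varepsilon\ge0$. A function $g:X\to\mathbb{R}\cup\{+\infty\}$ is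 an $\varepsilon$-perturbation of $f$ if $S_g\ne\emptyset$, $g=f+p$ with $p:X\to\mathbb{R}$ convex, and there exist $x\in S_f^=$ and $\xi\ge0$ such that $\xi+|\partial f|_{\rm bd}-\tau(f,x,\xi,|p(x)|)\le\varepsilon$ and $|p(u)-p(x)|\le\xi\|u-x\|$ for all $u\in X$. The set of these is $\mathrm{Ptb}(f,\varepsilon)$. *)

From Stdlib Require Import Reals Lra Classical ClassicalEpsilon.
Open Scope R_scope.
Set Implicit Arguments.

Record BanachSpace := {
  bs_car :> Type;
  vzero : bs_car;
  vadd : bs_car -> bs_car -> bs_car;
  vopp : bs_car -> bs_car;
  vscal : R -> bs_car -> bs_car;
  vnorm : bs_car -> R;
  vadd_assoc : forall x y z, vadd x (vadd y z) = vadd (vadd x y) z;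
  vadd_comm : forall x y, vadd x y = vadd y x;
  vadd_0 : forall x, vadd vzero x = x;
  vadd_opp : forall x, vadd x (vopp x) = vzero;
  vscal_addr : forall a x y, vscal a (vadd x y) = vadd (vscal a x) (vscal a y);
  vscal_addl : forall a b x, vscal (a + b) x = vadd (vscal a x) (vscal b x);
  vscal_assoc : forall a b x, vscal a (vscal b x) = vscal (a * b) x;
  vscal_1 : forall x, vscal 1 x = x;
  vnorm_eq0 : forall x, vnorm x = 0 -> x = vzero;
  vnorm_scal : forall a x, vnorm (vscal a x) = Rabs a * vnorm x;
  vnorm_triangle : forall x y, vnorm (vadd x y) <= vnorm x + vnorm y;
  vcomplete : forall u : nat -> bs_car,
    (forall eps, 0 < eps -> exists N, forall m n, (N <= m)%nat -> (N <= n)%nat ->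
        vnorm (vadd (u m) (vopp (u n))) < eps) ->
    exists l, forall eps, 0 < eps -> exists N, forall n, (N <= n)%nat ->
        vnorm (vadd (u n) (vopp l)) < eps
}.

Arguments vzero {_}.
Arguments vadd {_}.
Arguments vopp {_}.
Arguments vscal {_}.
Arguments vnorm {_}.

Definition vsub {X : BanachSpace} (x y : X) : X := vadd x (vopp y).

Inductive ERbar := Fin (r : R) | PInf.

Definition Ele (a b : ERbar) : Prop :=
  match a, b with
  | _, PInf => True
  | Fin x, Fin y => x <= y
  | PInf, Fin _ => False
  end.

Definition Eaddr (a : ERbar) (r : R) : ERbar :=
  match a with Fin x => Fin (x + r) | PInf => PInf end.

(** infimum in [-oo? no] R ∪ {+oo}; inf of the empty set is +oo *)
Definition is_Einf (S : ERbar -> Prop) (v : ERbar) : Prop :=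
  (forall w, S w -> Ele v w) /\ (forall m, (forall w, S w -> Ele m w) -> Ele m v).

Definition Einf (S : ERbar -> Prop) : ERbar :=
  epsilon (inhabits PInf) (is_Einf S).

Definition is_dual {X : BanachSpace} (phi : X -> R) : Prop :=
  (forall x y, phi (vadd x y) = phi x + phi y) /\
  (forall a x, phi (vscal a x) = a * phi x) /\
  (exists M, forall x, Rabs (phi x) <= M * vnorm x).

Definition dnorm {X : BanachSpace} (phi : X -> R) : R :=
  match Einf (fun v => exists M, v = Fin M /\ 0 <= M /\
                 forall x, Rabs (phi x) <= M * vnorm x) with
  | Fin r => r
  | PInf => 0
  end.

(** subsets of X^* are predicates on functionals; they are intersected with is_dual *)
Definition dist0 {X : BanachSpace} (A : (X -> R) -> Prop) : ERbar :=
  Einf (fun v => exists phi, is_dual phi /\ A phi /\ v = Fin (dnorm phi)).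

Definition dinterior {X : BanachSpace} (A : (X -> R) -> Prop) (phi : X -> R) : Prop :=
  is_dual phi /\ exists r, 0 < r /\
    forall psi, is_dual psi -> dnorm (fun x => psi x - phi x) < r -> A psi.

Definition dboundary {X : BanachSpace} (A : (X -> R) -> Prop) (phi : X -> R) : Prop :=
  is_dual phi /\ forall r, 0 < r ->
    (exists psi, is_dual psi /\ A psi /\ dnorm (fun x => psi x - phi x) < r) /\
    (exists psi, is_dual psi /\ ~ A psi /\ dnorm (fun x => psi x - phi x) < r).

Definition zero_dual {X : BanachSpace} : X -> R := fun _ => 0.

Definition proper {X : BanachSpace} (f : X -> ERbar) : Prop :=
  exists x, f x <> PInf.

Definition convexE {X : BanachSpace} (f : X -> ERbar) : Prop :=
  forall x y rx ry t, f x = Fin rx -> f y = Fin ry -> 0 <= t <= 1 ->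
    Ele (f (vadd (vscal t x) (vscal (1 - t) y))) (Fin (t * rx + (1 - t) * ry)).

Definition lscE {X : BanachSpace} (f : X -> ERbar) : Prop :=
  forall x r, ~ Ele (f x) (Fin r) ->
    exists delta, 0 < delta /\ forall y, vnorm (vsub y x) < delta -> ~ Ele (f y) (Fin r).

Definition Gamma0 {X : BanachSpace} (f : X -> ERbar) : Prop :=
  proper f /\ convexE f /\ lscE f.

Definition convexR {X : BanachSpace} (p : X -> R) : Prop :=
  forall x y t, 0 <= t <= 1 ->
    p (vadd (vscal t x) (vscal (1 - t) y)) <= t * p x + (1 - t) * p y.

(** * Subdifferential (empty outside dom f) *)
Definition subdiff {X : BanachSpace} (f : X -> ERbar) (x : X) (phi : X -> R) : Prop :=
  is_dual phi /\ exists rx, f x = Fin rx /\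
    forall u, Ele (Fin (phi (vsub u x) + rx)) (f u).

Definition Sf {X : BanachSpace} (f : X -> ERbar) (x : X) : Prop := Ele (f x) (Fin 0).
Definition Sfeq {X : BanachSpace} (f : X -> ERbar) (x : X) : Prop := f x = Fin 0.

Definition bd_modulus {X : BanachSpace} (f : X -> ERbar) : ERbar :=
  Einf (fun v => exists x, f x = Fin 0 /\ v = dist0 (dboundary (subdiff f x))).

Definition tau {X : BanachSpace} (f : X -> ERbar) (x : X) (eps delta : R) : ERbar :=
  if excluded_middle_informative (dinterior (subdiff f x) zero_dual)
  then dist0 (dboundary (subdiff f x))
  else Einf (fun v => exists u,
          Ele (Fin (- eps * vnorm (vsub u x) - delta)) (f u) /\
          v = dist0 (subdiff f u)).

(** Ptb(f, eps); the inequality  xi + |∂f|_bd - tau <= eps  is read as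
    xi + |∂f|_bd <= eps + tau  in [0,+oo] *)
Definition Ptb {X : BanachSpace} (f : X -> ERbar) (eps : R) (g : X -> ERbar) : Prop :=
  (exists y, Sf g y) /\
  exists p : X -> R, convexR p /\ (forall u, g u = Eaddr (f u) (p u)) /\
  exists x xi, Sfeq f x /\ 0 <= xi /\
    Ele (Eaddr (bd_modulus f) xi) (Eaddr (tau f x xi (Rabs (p x))) eps) /\
    (forall u, Rabs (p u - p x) <= xi * vnorm (vsub u x)).

(** If the constant [xi] in the definition of the perturbation were positive,
    the inequality [xi + |∂f|_bd <= eps + tau(f,x,xi,|p(x)|)] together with
    [eps <= |∂f|_bd] would force [tau >= xi].  But [0] is never interior to
    [∂f(x)]: otherwise a norming functional of [x_k - x], scaled into the ball
    around [0], would be a subgradient at [x], and monotonicity of [∂f] against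
    [x_k^* -> 0] would fail.  Hence [tau] is the infimum of [d(0, ∂f(u))] over
    the points [u] with [f(u) >= -xi ||u - x|| - |p(x)|]; since [f(x_k)] is
    bounded below and [||x_k|| -> oo], the [x_k] eventually qualify, so
    [tau <= ||x_k^*|| -> 0 < xi].  Thus [xi = 0], and the Lipschitz bound on [p]
    makes it constant.  Norming functionals come from the Hahn-Banach theorem,
    proved through Zorn's lemma: a minimal sublinear functional is linear. *)
From Stdlib Require Import Reals Lra Classical ClassicalEpsilon.
From mathcomp Require boolp classical_sets.
Open Scope R_scope.

Arguments vadd_assoc {_}. Arguments vadd_comm {_}. Arguments vadd_0 {_}.
Arguments vadd_opp {_}. Arguments vscal_addr {_}. Arguments vscal_addl {_}.
Arguments vscal_assoc {_}. Arguments vscal_1 {_}.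
Arguments vnorm_scal {_}. Arguments vnorm_triangle {_}.

Section VectorSpace.
Variable X : BanachSpace.
Implicit Types x y z a : X.

Lemma vadd_0r x : vadd x vzero = x.
Proof. rewrite vadd_comm; apply vadd_0. Qed.

Lemma vscal_0 x : vscal 0 x = vzero.
Proof.
  assert (Hdouble : vadd (vscal 0 x) (vscal 0 x) = vadd (vscal 0 x) vzero).
  { rewrite <- vscal_addl, vadd_0r. f_equal. ring. }
  assert (H := f_equal (vadd (vopp (vscal 0 x))) Hdouble).
  rewrite !vadd_assoc, (vadd_comm (vopp _)), vadd_opp, !vadd_0 in H. exact H.
Qed.

Lemma vopp_scal x : vopp x = vscal (-1) x.
Proof.
  rewrite <- (vadd_0 (vopp x)), <- (vscal_0 x).
  replace 0 with (1 + -1) by ring.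
  rewrite vscal_addl, vscal_1, (vadd_comm x), <- vadd_assoc, vadd_opp. apply vadd_0r.
Qed.

Lemma vnorm_opp x : vnorm (vopp x) = vnorm x.
Proof. rewrite vopp_scal, vnorm_scal, Rabs_left by lra. ring. Qed.

Lemma vnorm_0 : vnorm (@vzero X) = 0.
Proof. rewrite <- (vscal_0 vzero), vnorm_scal, Rabs_R0. ring. Qed.

Lemma vnorm_ge0 x : 0 <= vnorm x.
Proof.
  assert (H := vnorm_triangle x (vopp x)). rewrite vadd_opp, vnorm_0, vnorm_opp in H. lra.
Qed.

Lemma vopp_add x y : vopp (vadd x y) = vadd (vopp x) (vopp y).
Proof. rewrite !vopp_scal. apply vscal_addr. Qed.

Lemma vopp_opp x : vopp (vopp x) = x.
Proof. rewrite !vopp_scal, vscal_assoc. replace (-1 * -1) with 1 by ring. apply vscal_1. Qed.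

Lemma vsub_opp x y : vsub x y = vopp (vsub y x).
Proof. unfold vsub. rewrite vopp_add, vopp_opp. apply vadd_comm. Qed.

Lemma vadd_ACA x y z a : vadd (vadd x y) (vadd z a) = vadd (vadd x z) (vadd y a).
Proof. rewrite <- !vadd_assoc. f_equal. rewrite !vadd_assoc. f_equal. apply vadd_comm. Qed.

Lemma vsub_add x y : vadd (vsub x y) y = x.
Proof. unfold vsub. rewrite <- vadd_assoc, (vadd_comm (vopp y)), vadd_opp. apply vadd_0r. Qed.

Lemma vnorm_sub_ge x y : vnorm x - vnorm y <= vnorm (vsub x y).
Proof. assert (H := vnorm_triangle (vsub x y) y). rewrite vsub_add in H. lra. Qed.

End VectorSpace.

Definition is_inf (A : R -> Prop) (l : R) :=
  (forall a, A a -> l <= a) /\ (forall m, (forall a, A a -> m <= a) -> m <= l).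

Definition Rinf (A : R -> Prop) : R := epsilon (inhabits 0) (is_inf A).

Lemma Rinf_spec (A : R -> Prop) a0 m :
  A a0 -> (forall a, A a -> m <= a) -> is_inf A (Rinf A).
Proof.
  intros Ha0 Hm. unfold Rinf. apply epsilon_spec.
  destruct (completeness (fun y => A (- y))) as [l [Hub Hlub]].
  - exists (- m). intros y Hy. specialize (Hm _ Hy). lra.
  - exists (- a0). rewrite Ropp_involutive. exact Ha0.
  - exists (- l). split.
    + intros a Ha. assert (- a <= l) by (apply Hub; rewrite Ropp_involutive; exact Ha). lra.
    + intros c Hc. assert (l <= - c) by (apply Hlub; intros y Hy; specialize (Hc _ Hy); lra).
      lra.
Qed.

Lemma Rdiv_le_iff l a b : 0 < l -> (a / l <= b <-> a <= l * b).
Proof.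
  intro Hl. split; intro H.
  - replace a with (l * (a / l)) by (field; lra). apply Rmult_le_compat_l; lra.
  - apply Rmult_le_reg_l with l; [exact Hl |].
    replace (l * (a / l)) with a by (field; lra). exact H.
Qed.

Lemma Ele_trans a b c : Ele a b -> Ele b c -> Ele a c.
Proof. destruct a, b, c; simpl; intros; try lra; tauto. Qed.

(* [ERbar] has no [-oo], so only sets bounded below (here: by [0]) have an infimum. *)
Lemma Einf_spec (S : ERbar -> Prop) :
  (forall w, S w -> Ele (Fin 0) w) -> is_Einf S (Einf S).
Proof.
  intro Hnn. unfold Einf. apply epsilon_spec.
  destruct (classic (exists r, S (Fin r))) as [[r0 Hr0] | Hnone].
  - destruct (Rinf_spec (fun r => S (Fin r)) r0 0 Hr0 (fun a Ha => Hnn _ Ha)) as [Hlb Hglb].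
    exists (Fin (Rinf (fun r => S (Fin r)))). split.
    + intros [w|] Hw; simpl; auto.
    + intros [m|] Hm; simpl; [apply Hglb; intros a Ha; exact (Hm _ Ha) | exact (Hm _ Hr0)].
  - exists PInf. split.
    + intros [w|] Hw; simpl; auto. apply Hnone; eauto.
    + intros [m|] Hm; simpl; auto.
Qed.

Lemma Einf_le (S : ERbar -> Prop) w :
  (forall w, S w -> Ele (Fin 0) w) -> S w -> Ele (Einf S) w.
Proof. intros Hnn Hw. exact (proj1 (Einf_spec S Hnn) w Hw). Qed.

Lemma Einf_ge (S : ERbar -> Prop) m :
  (forall w, S w -> Ele (Fin 0) w) -> (forall w, S w -> Ele m w) -> Ele m (Einf S).
Proof. intros Hnn Hm. exact (proj2 (Einf_spec S Hnn) m Hm). Qed.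

Lemma Eaddr_le_cancel b t xi eps :
  Ele (Fin eps) b -> Ele (Eaddr b xi) (Eaddr t eps) -> Ele (Fin xi) t.
Proof. destruct b, t; simpl; intros; try lra; tauto. Qed.

Section DualNorm.
Variable X : BanachSpace.
Implicit Types phi psi : X -> R.

Definition dual_bounds phi : ERbar -> Prop :=
  fun v => exists M, v = Fin M /\ 0 <= M /\ forall x, Rabs (phi x) <= M * vnorm x.

Lemma dual_bounds_ge0 phi w : dual_bounds phi w -> Ele (Fin 0) w.
Proof. intros [M [-> [HM _]]]. exact HM. Qed.

Lemma dual_opp phi x : is_dual phi -> phi (vopp x) = - phi x.
Proof. intros [_ [Hscal _]]. rewrite vopp_scal, Hscal. ring. Qed.

Lemma dnorm_ge0 phi : 0 <= dnorm phi.
Proof.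
  unfold dnorm. fold (dual_bounds phi).
  assert (H := Einf_ge _ (Fin 0) (dual_bounds_ge0 phi) (dual_bounds_ge0 phi)).
  destruct (Einf (dual_bounds phi)); simpl in *; lra.
Qed.

Lemma dnorm_le phi M :
  0 <= M -> (forall x, Rabs (phi x) <= M * vnorm x) -> dnorm phi <= M.
Proof.
  intros HM Hbound. unfold dnorm. fold (dual_bounds phi).
  assert (H := Einf_le _ (Fin M) (dual_bounds_ge0 phi) (ex_intro _ M (conj eq_refl (conj HM Hbound)))).
  destruct (Einf (dual_bounds phi)); simpl in *; [lra | contradiction].
Qed.

Lemma dnorm_bound phi x : is_dual phi -> Rabs (phi x) <= dnorm phi * vnorm x.
Proof.
  intros [_ [_ [M HM]]].
  assert (HM' : forall y, Rabs (phi y) <= Rabs M * vnorm y).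
  { intro y. eapply Rle_trans; [apply HM |].
    apply Rmult_le_compat_r; [apply vnorm_ge0 | apply Rle_abs]. }
  assert (Hfin := Einf_le _ (Fin (Rabs M)) (dual_bounds_ge0 phi)
                    (ex_intro _ (Rabs M) (conj eq_refl (conj (Rabs_pos M) HM')))).
  unfold dnorm. fold (dual_bounds phi).
  destruct (Einf (dual_bounds phi)) as [r|] eqn:Er; [| contradiction].
  destruct (vnorm_ge0 _ x) as [Hx | Hx].
  - (* [|phi x| / ||x||] is a lower bound of the admissible constants. *)
    assert (Hratio : Ele (Fin (Rabs (phi x) / vnorm x)) (Einf (dual_bounds phi))).
    { apply Einf_ge; [apply dual_bounds_ge0 |].
      intros w [M' [-> [_ HM'b]]]. simpl.
      apply Rdiv_le_iff; [exact Hx |]. rewrite Rmult_comm. apply HM'b. }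
    rewrite Er in Hratio. simpl in Hratio.
    rewrite Rmult_comm. apply Rdiv_le_iff; [exact Hx | exact Hratio].
  - specialize (HM' x). rewrite <- Hx, Rmult_0_r in HM' |- *. exact HM'.
Qed.

Lemma dist0_sets_ge0 (A : (X -> R) -> Prop) w :
  (exists phi, is_dual phi /\ A phi /\ w = Fin (dnorm phi)) -> Ele (Fin 0) w.
Proof. intros [phi [_ [_ ->]]]. apply dnorm_ge0. Qed.

Lemma dist0_ge0 (A : (X -> R) -> Prop) : Ele (Fin 0) (dist0 A).
Proof. apply Einf_ge; apply dist0_sets_ge0. Qed.

Lemma dist0_le (A : (X -> R) -> Prop) phi :
  is_dual phi -> A phi -> Ele (dist0 A) (Fin (dnorm phi)).
Proof. intros Hphi HA. apply Einf_le; [apply dist0_sets_ge0 | eauto]. Qed.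

End DualNorm.

Section HahnBanach.
Variable X : BanachSpace.
Implicit Types (x y a : X) (r q : X -> R).

Definition sublinear r :=
  (forall x y, r (vadd x y) <= r x + r y) /\
  (forall l x, 0 <= l -> r (vscal l x) <= l * r x).

Lemma vnorm_sublinear : sublinear (@vnorm X).
Proof.
  split; [apply vnorm_triangle |].
  intros l x Hl. rewrite vnorm_scal, Rabs_pos_eq by exact Hl. lra.
Qed.

Lemma sublinear_0 r : sublinear r -> r vzero = 0.
Proof.
  intros [Hadd Hscal]. assert (H1 := Hadd vzero vzero). rewrite vadd_0 in H1.
  assert (H2 := Hscal 0 vzero (Rle_refl 0)). rewrite vscal_0 in H2. lra.
Qed.

Lemma sublinear_scal r l x : sublinear r -> 0 <= l -> r (vscal l x) = l * r x.
Proof.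
  intros Hr [Hl | <-].
  - apply Rle_antisym; [apply (proj2 Hr); lra |].
    assert (H := proj2 Hr (/ l) (vscal l x) (Rlt_le _ _ (Rinv_0_lt_compat _ Hl))).
    rewrite vscal_assoc, Rinv_l, vscal_1 in H by lra.
    replace (r (vscal l x)) with (l * (/ l * r (vscal l x))) by (field; lra).
    apply Rmult_le_compat_l; lra.
  - rewrite vscal_0, Rmult_0_l. apply sublinear_0, Hr.
Qed.

Lemma sublinear_opp_le r x : sublinear r -> - r (vopp x) <= r x.
Proof.
  intro Hr. assert (H := proj1 Hr x (vopp x)). rewrite vadd_opp, sublinear_0 in H by exact Hr.
  lra.
Qed.

Definition linear_form q :=
  (forall x y, q (vadd x y) = q x + q y) /\ (forall l x, q (vscal l x) = l * q x).

Lemma sublinear_odd_linear q :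
  sublinear q -> (forall a, q (vopp a) <= - q a) -> linear_form q.
Proof.
  intros Hq Hodd.
  assert (Hopp : forall a, q (vopp a) = - q a).
  { intro a. assert (H := sublinear_opp_le q a Hq). specialize (Hodd a). lra. }
  split.
  - intros x y. apply Rle_antisym; [apply (proj1 Hq) |].
    assert (H := proj1 Hq (vopp x) (vopp y)). rewrite <- vopp_add, !Hopp in H. lra.
  - intros l x. destruct (Rle_lt_dec 0 l) as [Hl | Hl]; [apply sublinear_scal; assumption |].
    replace (vscal l x) with (vopp (vscal (- l) x))
      by (rewrite vopp_scal, vscal_assoc; f_equal; ring).
    rewrite Hopp, sublinear_scal by (exact Hq || lra). ring.
Qed.

(* Pushing [r] down along the ray through [a]: the result is still sublinear
   and below [r], but becomes odd at [a] (see [trim_opp]). *)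
Definition trim r a x : R :=
  Rinf (fun v => exists t, 0 <= t /\ v = r (vadd x (vscal t a)) - t * r a).

Section Trim.
Variables (r : X -> R) (a : X).
Hypothesis Hr : sublinear r.

Lemma trim_is_inf x :
  is_inf (fun v => exists t, 0 <= t /\ v = r (vadd x (vscal t a)) - t * r a) (trim r a x).
Proof.
  apply Rinf_spec with (r (vadd x (vscal 0 a)) - 0 * r a) (- r (vopp x)).
  - exists 0. split; [lra | reflexivity].
  - intros v [t [Ht ->]].
    assert (H := proj1 Hr (vadd x (vscal t a)) (vopp x)).
    replace (vadd (vadd x (vscal t a)) (vopp x)) with (vscal t a) in H
      by (rewrite (vadd_comm x), <- vadd_assoc, vadd_opp; symmetry; apply vadd_0r).
    rewrite sublinear_scal in H by assumption. lra.
Qed.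

Lemma trim_le x t : 0 <= t -> trim r a x <= r (vadd x (vscal t a)) - t * r a.
Proof. intro Ht. apply (proj1 (trim_is_inf x)). exists t; auto. Qed.

Lemma trim_ge x m :
  (forall t, 0 <= t -> m <= r (vadd x (vscal t a)) - t * r a) -> m <= trim r a x.
Proof. intro H. apply (proj2 (trim_is_inf x)). intros v [t [Ht ->]]. auto. Qed.

Lemma trim_le_self x : trim r a x <= r x.
Proof.
  eapply Rle_trans; [apply (trim_le x 0); lra |].
  rewrite vscal_0, vadd_0r. lra.
Qed.

Lemma trim_opp : trim r a (vopp a) <= - r a.
Proof.
  eapply Rle_trans; [apply (trim_le (vopp a) 1); lra |].
  rewrite vscal_1, (vadd_comm (vopp a)), vadd_opp, sublinear_0 by exact Hr. lra.
Qed.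

Lemma trim_sublinear : sublinear (trim r a).
Proof.
  split.
  - intros x y.
    assert (Hsum : forall t1 t2, 0 <= t1 -> 0 <= t2 -> trim r a (vadd x y) <=
       (r (vadd x (vscal t1 a)) - t1 * r a) + (r (vadd y (vscal t2 a)) - t2 * r a)).
    { intros t1 t2 H1 H2. eapply Rle_trans; [apply (trim_le _ (t1 + t2)); lra |].
      rewrite vscal_addl, vadd_ACA.
      assert (H := proj1 Hr (vadd x (vscal t1 a)) (vadd y (vscal t2 a))). lra. }
    assert (trim r a (vadd x y) - trim r a y <= trim r a x); [| lra].
    apply trim_ge. intros t1 H1.
    assert (trim r a (vadd x y) - (r (vadd x (vscal t1 a)) - t1 * r a) <= trim r a y); [| lra].
    apply trim_ge. intros t2 H2. specialize (Hsum t1 t2 H1 H2). lra.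
  - intros l x [Hl | <-].
    + apply Rdiv_le_iff; [exact Hl |]. apply trim_ge. intros t Ht.
      apply Rdiv_le_iff; [exact Hl |].
      assert (H := trim_le (vscal l x) (l * t) (Rmult_le_pos _ _ (Rlt_le _ _ Hl) Ht)).
      rewrite <- vscal_assoc, <- vscal_addr, (sublinear_scal r) in H by (exact Hr || lra).
      nra.
    + rewrite vscal_0, Rmult_0_l. eapply Rle_trans; [apply trim_le_self |].
      rewrite sublinear_0 by exact Hr. lra.
Qed.

End Trim.

Lemma chain_inf_sublinear r (A : (X -> R) -> Prop) :
  sublinear r -> (forall q, A q -> sublinear q /\ forall x, q x <= r x) ->
  (exists q, A q) ->
  (forall q1 q2, A q1 -> A q2 -> (forall x, q1 x <= q2 x) \/ (forall x, q2 x <= q1 x)) ->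
  exists Q, sublinear Q /\ (forall x, Q x <= r x) /\ forall q, A q -> forall x, Q x <= q x.
Proof.
  intros Hr HA [q0 Hq0] Hchain.
  set (Q := fun x => Rinf (fun v => exists q, A q /\ v = q x)).
  assert (HQ : forall x, is_inf (fun v => exists q, A q /\ v = q x) (Q x)).
  { intro x. apply Rinf_spec with (q0 x) (- r (vopp x)); [eauto |].
    intros v [q [Hq ->]]. destruct (HA q Hq) as [Hqs Hqr].
    assert (H := sublinear_opp_le q x Hqs). specialize (Hqr (vopp x)). lra. }
  assert (Hle : forall x q, A q -> Q x <= q x).
  { intros x q Hq. apply (proj1 (HQ x)). eauto. }
  assert (Hge : forall x m, (forall q, A q -> m <= q x) -> m <= Q x).
  { intros x m H. apply (proj2 (HQ x)). intros v [q [Hq ->]]. auto. }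
  exists Q. split; [split | split; [| intros q Hq x; exact (Hle x q Hq)]].
  - (* [q1 x + q2 y] dominates the smaller of [q1], [q2] at [x + y]: the chain is totally ordered *)
    intros x y.
    assert (Q (vadd x y) - Q y <= Q x); [| lra].
    apply Hge. intros q1 H1.
    assert (Q (vadd x y) - q1 x <= Q y); [| lra].
    apply Hge. intros q2 H2.
    destruct (Hchain q1 q2 H1 H2) as [H12 | H21].
    + assert (E := Hle (vadd x y) q1 H1).
      assert (E2 := proj1 (proj1 (HA q1 H1)) x y). specialize (H12 y). lra.
    + assert (E := Hle (vadd x y) q2 H2).
      assert (E2 := proj1 (proj1 (HA q2 H2)) x y). specialize (H21 x). lra.
  - intros l x [Hl | <-].
    + apply Rdiv_le_iff; [exact Hl |]. apply Hge. intros q Hq.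
      apply Rdiv_le_iff; [exact Hl |]. assert (E := Hle (vscal l x) q Hq).
      rewrite (sublinear_scal q) in E by (exact (proj1 (HA q Hq)) || lra). exact E.
    + rewrite vscal_0, Rmult_0_l. eapply Rle_trans; [apply (Hle _ q0 Hq0) |].
      rewrite sublinear_0 by exact (proj1 (HA q0 Hq0)). lra.
  - intro x. eapply Rle_trans; [apply (Hle _ q0 Hq0) | apply (HA q0 Hq0)].
Qed.

Lemma sublinear_dominates_linear r :
  sublinear r -> exists q, linear_form q /\ forall x, q x <= r x.
Proof.
  intro Hr.
  set (T := {q | sublinear q /\ forall x, q x <= r x}).
  set (below := fun s t : T => boolp.asbool (forall x, proj1_sig t x <= proj1_sig s x)).
  assert (Hbelow : forall s t : T, is_true (below s t) <-> forall x, proj1_sig t x <= proj1_sig s x).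
  { intros s t. unfold below. split; intro H; [exact (boolp.asboolW H) | exact (boolp.asboolT H)]. }
  destruct (@classical_sets.ZL_preorder T (exist _ r (conj Hr (fun x => Rle_refl _))) below)
    as [[q [Hq Hqr]] Hmin].
  - intro t. apply Hbelow. intro x. lra.
  - intros s t u Hst Htu. apply Hbelow. intro x.
    assert (H1 := proj1 (Hbelow _ _) Hst x). assert (H2 := proj1 (Hbelow _ _) Htu x). lra.
  - intros C Hchain.
    destruct (classic (exists s, C s)) as [[s0 Hs0] | Hempty].
    + destruct (chain_inf_sublinear r (fun q => exists s : T, C s /\ proj1_sig s = q) Hr)
        as [Q [HQs [HQr HQ]]].
      * intros q [s [_ <-]]. exact (proj2_sig s).
      * exists (proj1_sig s0); eauto.
      * intros q1 q2 [s1 [H1 <-]] [s2 [H2 <-]].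
        destruct (Hchain s1 s2 H1 H2) as [H12 | H21];
          [right; exact (proj1 (Hbelow _ _) H12) | left; exact (proj1 (Hbelow _ _) H21)].
      * exists (exist _ Q (conj HQs HQr)). intros s Hs. apply Hbelow. intro x.
        apply (HQ (proj1_sig s)); eauto.
    + exists (exist _ r (conj Hr (fun x => Rle_refl _))). intros s Hs. exfalso. eauto.
  - exists q. split; [| exact Hqr].
    apply sublinear_odd_linear; [exact Hq |]. intro a.
    (* minimality of [q] makes it agree with [trim q a], which is odd at [a] *)
    assert (Htrim : is_true (below (exist _ q (conj Hq Hqr))
               (exist _ (trim q a) (conj (trim_sublinear q a Hq)
                  (fun x => Rle_trans _ _ _ (trim_le_self q a Hq x) (Hqr x)))))).
    { apply Hbelow. intro x. apply trim_le_self, Hq. }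
    assert (H := proj1 (Hbelow _ _) (Hmin _ Htrim) (vopp a)). simpl in H.
    assert (H' := trim_opp q a Hq). lra.
Qed.

Lemma norming_functional w :
  exists q, is_dual q /\ (forall x, Rabs (q x) <= vnorm x) /\ q w = vnorm w.
Proof.
  destruct (sublinear_dominates_linear (trim vnorm w) (trim_sublinear _ w vnorm_sublinear))
    as [q [[Hadd Hscal] Hq]].
  assert (Hnorm : forall x, q x <= vnorm x)
    by (intro x; eapply Rle_trans; [apply Hq | apply trim_le_self, vnorm_sublinear]).
  assert (Hopp : forall x, q (vopp x) = - q x) by (intro x; rewrite vopp_scal, Hscal; ring).
  assert (Habs : forall x, Rabs (q x) <= vnorm x).
  { intro x. apply Rabs_le. split; [| apply Hnorm].
    assert (H := Hnorm (vopp x)). rewrite Hopp, vnorm_opp in H. lra. }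
  exists q. split; [| split; [exact Habs |]].
  - split; [exact Hadd | split; [exact Hscal |]].
    exists 1. intro x. rewrite Rmult_1_l. apply Habs.
  - apply Rle_antisym; [apply Hnorm |].
    assert (H := Rle_trans _ _ _ (Hq (vopp w)) (trim_opp _ w vnorm_sublinear)).
    rewrite Hopp in H. lra.
Qed.

End HahnBanach.

Lemma subdiff_monotone {X : BanachSpace} (f : X -> ERbar) x y psi phi :
  subdiff f x psi -> subdiff f y phi -> psi (vsub y x) <= phi (vsub y x).
Proof.
  intros [_ [rx [Hfx Hx]]] [Hphi [ry [Hfy Hy]]].
  specialize (Hx y). specialize (Hy x). rewrite Hfy in Hx. rewrite Hfx in Hy. simpl in Hx, Hy.
  rewrite vsub_opp, dual_opp in Hy by exact Hphi. lra.
Qed.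

Lemma tau_le_subgradient {X : BanachSpace} (f : X -> ERbar) x xi delta u phi :
  ~ dinterior (subdiff f x) zero_dual ->
  Ele (Fin (- xi * vnorm (vsub u x) - delta)) (f u) -> subdiff f u phi ->
  Ele (tau f x xi delta) (Fin (dnorm phi)).
Proof.
  intros Hnint Hu Hphi. unfold tau.
  destruct excluded_middle_informative as [Hint | _]; [contradiction |].
  eapply Ele_trans; [apply Einf_le | apply dist0_le; [apply Hphi | exact Hphi]].
  - intros w [v [_ ->]]. apply dist0_ge0.
  - exists u. split; [exact Hu | reflexivity].
Qed.

Section EscapingSubgradients.
Variables (X : BanachSpace) (f : X -> ERbar) (xs : nat -> X) (xss : nat -> X -> R).
Hypothesis hsub : forall k, subdiff f (xs k) (xss k).
Hypothesis hxinf : forall M, exists N, forall k, (N <= k)%nat -> M <= vnorm (xs k).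
Hypothesis hxs0 : Un_cv (fun k => dnorm (xss k)) 0.

Lemma small_subgradient_far e M : 0 < e -> exists k, dnorm (xss k) < e /\ M <= vnorm (xs k).
Proof.
  intro He. destruct (hxs0 e He) as [N1 HN1]. destruct (hxinf M) as [N2 HN2].
  exists (max N1 N2). split.
  - specialize (HN1 (max N1 N2) (Nat.le_max_l _ _)). unfold R_dist in HN1.
    rewrite Rminus_0_r in HN1. eapply Rle_lt_trans; [apply Rle_abs | exact HN1].
  - apply HN2, Nat.le_max_r.
Qed.

Lemma subdiff_not_interior x : ~ dinterior (subdiff f x) zero_dual.
Proof.
  intros [_ [r [Hr Hball]]].
  destruct (small_subgradient_far (r / 2) (vnorm x + 1)) as [k [Hsmall Hfar]]; [lra |].
  set (w := vsub (xs k) x).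
  assert (Hw : 0 < vnorm w) by (assert (H := vnorm_sub_ge _ (xs k) x); unfold w; lra).
  destruct (norming_functional X w) as [q [[Hqadd [Hqscal _]] [Hqb Hqw]]].
  set (psi := fun v => r / 2 * q v).
  assert (Hpsi_bound : forall v, Rabs (psi v) <= r / 2 * vnorm v).
  { intro v. unfold psi. rewrite Rabs_mult, Rabs_pos_eq by lra.
    apply Rmult_le_compat_l; [lra | apply Hqb]. }
  assert (Hpsi : is_dual psi).
  { unfold psi. split; [| split].
    - intros a b. rewrite Hqadd. ring.
    - intros l a. rewrite Hqscal. ring.
    - exists (r / 2). exact Hpsi_bound. }
  assert (Hpsi_ball : dnorm (fun v => psi v - zero_dual v) < r).
  { eapply Rle_lt_trans; [apply (dnorm_le _ _ (r / 2)); [lra |] | lra].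
    intro v. unfold zero_dual. rewrite Rminus_0_r. apply Hpsi_bound. }
  assert (Hmono := subdiff_monotone f x (xs k) psi (xss k) (Hball psi Hpsi Hpsi_ball) (hsub k)).
  fold w in Hmono. unfold psi in Hmono. rewrite Hqw in Hmono.
  assert (Hbound := dnorm_bound _ (xss k) w (proj1 (hsub k))).
  assert (H := Rle_abs (xss k w)).
  assert (dnorm (xss k) * vnorm w < r / 2 * vnorm w) by (apply Rmult_lt_compat_r; lra).
  lra.
Qed.

Hypothesis hbdd : exists m, forall k, Ele (Fin m) (f (xs k)).

Lemma tau_lt x xi delta : 0 < xi -> ~ Ele (Fin xi) (tau f x xi delta).
Proof.
  intros Hxi Hle. destruct hbdd as [m Hm].
  set (K := (Rabs m + Rabs delta) / xi).
  destruct (small_subgradient_far xi (vnorm x + K)) as [k [Hsmall Hfar]]; [exact Hxi |].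
  assert (Hreach : Ele (Fin (- xi * vnorm (vsub (xs k) x) - delta)) (f (xs k))).
  { eapply Ele_trans; [| apply Hm]. simpl.
    assert (HK : xi * K <= xi * vnorm (vsub (xs k) x)).
    { apply Rmult_le_compat_l; [lra |]. assert (H := vnorm_sub_ge _ (xs k) x). lra. }
    replace (xi * K) with (Rabs m + Rabs delta) in HK by (unfold K; field; lra).
    assert (H1 := Rle_abs (- m)). assert (H2 := Rle_abs (- delta)). rewrite !Rabs_Ropp in H1, H2.
    rewrite Ropp_mult_distr_l_reverse. lra. }
  assert (Htau := tau_le_subgradient f x xi delta (xs k) (xss k)
                    (subdiff_not_interior x) Hreach (hsub k)).
  assert (H := Ele_trans _ _ _ Hle Htau). simpl in H. lra.
Qed.

End EscapingSubgradients.

Theorem mainTheorem6 (X : BanachSpace) (f : X -> ERbar)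
  (hf : Gamma0 f) (hS : exists x, Sfeq f x)
  (xs : nat -> X) (xss : nat -> X -> R)
  (hsub : forall k, subdiff f (xs k) (xss k))
  (hxinf : forall M, exists N, forall k, (N <= k)%nat -> M <= vnorm (xs k))
  (hxs0 : Un_cv (fun k => dnorm (xss k)) 0)
  (hbdd : exists m, forall k, Ele (Fin m) (f (xs k))) :
  forall (eps : R), 0 <= eps -> Ele (Fin eps) (bd_modulus f) ->
  forall g : X -> ERbar, Ptb f eps g ->
  exists c : R, forall x, g x = Eaddr (f x) c.
Proof.
  intros eps _ Hbd g [_ [p [_ [Hg [x [xi [_ [Hxi [Hineq Hlip]]]]]]]]].
  assert (Hxi0 : xi = 0).
  { destruct Hxi as [Hpos | <-]; [exfalso | reflexivity].
    exact (tau_lt X f xs xss hsub hxinf hxs0 hbdd x xi (Rabs (p x)) Hpos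
             (Eaddr_le_cancel _ _ _ _ Hbd Hineq)). }
  exists (p x). intro u. rewrite Hg. f_equal.
  specialize (Hlip u). rewrite Hxi0, Rmult_0_l in Hlip.
  assert (H1 := Rle_abs (p u - p x)). assert (H2 := Rle_abs (- (p u - p x))).
  rewrite Rabs_Ropp in H2. lra.
Qed.
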